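(* In any $\delta$-ring $A$, for every $n\ge1$ and $f\in A$, \[ \delta_n(f)=\sum_{k=0}^{n-1}\theta_{n-k}(\delta_k(f)). \]
   Context: A $\delta$-ring is a commutative ring with $\delta$ such that $\phi(x)=x^p+p\delta(x)$ is a ring endomorphism. The operations $\delta_k$ are the Witt components of the map $A\to W(A)$ encoding the $\delta$-structure, characterized by $\phi^n(f)=\sum_{k=0}^np^k\delta_k(f)^{p^{n-k}}$ for all $n$ (so $\delta_0=\mathrm{id}$, $\delta_1=\delta$). The operations $\theta_n$ ($n\ge1$) are the natural operations characterized by $\phi(f^{p^{n-1}})=f^{p^n}+p^n\theta_n(f)$. *)

From HB Require Import structures.
From mathcomp Require Import all_boot all_order all_algebra.
Set Implicit Arguments. Unset Strict Implicit. Unset Printing Implicit Defensive.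
Import GRing.Theory.
Local Open Scope ring_scope.

(* These say exactly that phi(x) = x^p + p delta(x) is a ring endomorphism
   "universally" (i.e. with the division by p performed in Z). *)
Record deltaRing (p : nat) := DeltaRing {
  dcarrier :> comPzRingType;
  delta : dcarrier -> dcarrier;
  delta0 : delta 0 = 0;
  delta1 : delta 1 = 0;
  deltaM : forall x y : dcarrier,
    delta (x * y) = x ^+ p * delta y + y ^+ p * delta x + p%:R * delta x * delta y;
  deltaD : forall x y : dcarrier,
    delta (x + y) = delta x + delta y
      - \sum_(1 <= i < p) ('C(p, i) %/ p)%:R * x ^+ i * y ^+ (p - i)
}.

Arguments delta {p} d _.

Definition phi (p : nat) (A : deltaRing p) (x : A) : A := x ^+ p + p%:R * delta A x.

Definition delta_hom (p : nat) (A B : deltaRing p) (g : {rmorphism A -> B}) : Prop :=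
  forall a : A, g (delta A a) = delta B (g a).

Definition natural_op (p : nat) (F : forall A : deltaRing p, A -> A) : Prop :=
  forall (A B : deltaRing p) (g : {rmorphism A -> B}), delta_hom g ->
    forall a : A, g (F A a) = F B (g a).

Definition witt_components (p : nat) (D : nat -> forall A : deltaRing p, A -> A) : Prop :=
  (forall k, natural_op (D k)) /\
  forall (A : deltaRing p) (n : nat) (f : A),
    iter n (@phi p A) f = \sum_(k < n.+1) (p ^ k)%:R * (D k A f) ^+ (p ^ (n - k)).

(* theta_n (n >= 1): characterized by phi(f^(p^(n-1))) = f^(p^n) + p^n theta_n(f).
   (The value at index 0 is irrelevant and unconstrained.) *)
Definition theta_ops (p : nat) (T : nat -> forall A : deltaRing p, A -> A) : Prop :=
  (forall n, (0 < n)%N -> natural_op (T n)) /\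
  forall (A : deltaRing p) (n : nat) (f : A), (0 < n)%N ->
    phi (f ^+ (p ^ n.-1)) = f ^+ (p ^ n) + (p ^ n)%:R * T n A f.

(* Applying phi to the Witt expansion of phi^(n-1)(f), the defining property
   of theta turns the term p^k delta_k(f)^(p^(n-1-k)) into
   p^k delta_k(f)^(p^(n-k)) + p^n theta_(n-k)(delta_k(f)); comparing with the
   Witt expansion of phi^n(f) leaves p^n delta_n(f) = p^n sum_(k<n)
   theta_(n-k)(delta_k(f)), which gives the identity in every p-torsion-free
   delta-ring.  Both sides being natural, it then suffices to check it on the
   free delta-ring Z[X_0, X_1, ...] at X_0, which maps to f under the
   delta-map X_i |-> delta^i(f).  That ring is torsion-free, and its delta is
   read off the Frobenius lift X_i |-> X_i^p + p X_(i+1), so delta X_i = X_(i+1). *)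

From HB Require Import structures.
From mathcomp Require Import all_boot all_order all_algebra.
From mathcomp Require Import finmap ring.
From mathcomp.multinomials Require Import monalg.
Set Implicit Arguments. Unset Strict Implicit. Unset Printing Implicit Defensive.
Import GRing.Theory.
Local Open Scope ring_scope.

Definition binom_carry (p : nat) (S : comPzRingType) (x y : S) : S :=
  \sum_(1 <= i < p) ('C(p, i) %/ p)%:R * x ^+ i * y ^+ (p - i).

Lemma exprD_carry (p : nat) (S : comPzRingType) (x y : S) : prime p ->
  (x + y) ^+ p = x ^+ p + y ^+ p + p%:R * binom_carry p x y.
Proof.
move=> p_prime; have p_gt0 := prime_gt0 p_prime.
rewrite addrC exprDn -(big_mkord xpredT (fun i => y ^+ (p - i) * x ^+ i *+ 'C(p, i))).
rewrite big_nat_recr //= big_ltn //= subnn subn0 bin0 binn !expr0 mulr1 mul1r.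
rewrite !mulr1n addrAC [y ^+ p + _]addrC; congr (_ + _).
rewrite /binom_carry big_distrr /=; apply: eq_big_nat => i /andP[i_gt0 i_lt_p].
have p_dvd_bin : (p %| 'C(p, i))%N by apply: prime_dvd_bin; rewrite ?i_gt0.
by rewrite -mulr_natl -{1}(divnK p_dvd_bin) natrM; ring.
Qed.

Lemma rmorph_binom_carry (p : nat) (R S : comPzRingType) (g : {rmorphism R -> S})
    (x y : R) : g (binom_carry p x y) = binom_carry p (g x) (g y).
Proof.
rewrite rmorph_sum; apply: eq_bigr => i _.
by rewrite !rmorphM rmorph_nat !rmorphXn.
Qed.

Section DeltaRingTheory.
Variables (p : nat) (A : deltaRing p).
Implicit Types x y : A.

Lemma deltaN x : delta A (- x) = binom_carry p x (- x) - delta A x.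
Proof.
have := deltaD x (- x); rewrite subrr delta0 -/(binom_carry p x (- x)).
by move=> /esym/subr0_eq <-; rewrite addrAC subrr add0r.
Qed.

Hypothesis p_prime : prime p.

Lemma phi_is_nmod_morphism : nmod_morphism (@phi p A).
Proof.
split=> [|x y]; first by rewrite /phi delta0 mulr0 addr0 expr0n gtn_eqF ?prime_gt0.
by rewrite /phi deltaD -/(binom_carry p x y) exprD_carry //; ring.
Qed.

Lemma phi_is_monoid_morphism : monoid_morphism (@phi p A).
Proof.
split=> [|x y]; first by rewrite /phi delta1 mulr0 addr0 expr1n.
by rewrite /phi deltaM exprMn; ring.
Qed.

HB.instance Definition _ := GRing.isNmodMorphism.Build A A (@phi p A)
  phi_is_nmod_morphism.
HB.instance Definition _ := GRing.isMonoidMorphism.Build A A (@phi p A)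
  phi_is_monoid_morphism.

End DeltaRingTheory.

Section DeltaHomClosure.
Variables (p : nat) (A B : deltaRing p) (g : {rmorphism A -> B}).
Implicit Types x y : A.

Lemma delta_hom1 : g (delta A 1) = delta B (g 1).
Proof. by rewrite delta1 rmorph1 rmorph0 delta1. Qed.

Lemma delta_homN x :
  g (delta A x) = delta B (g x) -> g (delta A (- x)) = delta B (g (- x)).
Proof.
move=> gx; rewrite [g (- x)]rmorphN !deltaN rmorphB rmorph_binom_carry.
by rewrite rmorphN gx.
Qed.

Lemma delta_homD x y :
  g (delta A x) = delta B (g x) -> g (delta A y) = delta B (g y) ->
  g (delta A (x + y)) = delta B (g (x + y)).
Proof.
move=> gx gy; rewrite rmorphD !deltaD -!/(binom_carry p _ _).
by rewrite rmorphB rmorphD rmorph_binom_carry gx gy.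
Qed.

Lemma delta_homM x y :
  g (delta A x) = delta B (g x) -> g (delta A y) = delta B (g y) ->
  g (delta A (x * y)) = delta B (g (x * y)).
Proof.
move=> gx gy; rewrite rmorphM !deltaM.
by rewrite !rmorphD !rmorphM !rmorphXn rmorph_nat gx gy.
Qed.

End DeltaHomClosure.

Section TorsionFree.
(* Otherwise the [deltaRing] argument of [D] and [T] would become implicit. *)
Local Unset Implicit Arguments.
Context {p : nat} {D T : nat -> forall A : deltaRing p, A -> A} {A : deltaRing p}.
Hypotheses (p_prime : prime p) (p_lreg : GRing.lreg (p%:R : A)).
Hypothesis iter_phi_witt : forall (n : nat) (f : A),
  iter n (@phi p A) f = \sum_(k < n.+1) (p ^ k)%:R * (D k A f) ^+ (p ^ (n - k)).
Hypothesis phi_theta : forall (n : nat) (f : A), (0 < n)%N ->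
  phi (f ^+ (p ^ n.-1)) = f ^+ (p ^ n) + (p ^ n)%:R * T n A f.

Lemma phi_witt_term (n k : nat) (x : A) : (k <= n)%N ->
  phi ((p ^ k)%:R * x ^+ (p ^ (n - k))) =
    (p ^ k)%:R * x ^+ (p ^ (n.+1 - k)) + (p ^ n.+1)%:R * T (n.+1 - k) A x.
Proof.
move=> le_kn; rewrite rmorphM rmorph_nat.
have := phi_theta (n.+1 - k) x; rewrite subSn //= => -> //.
by rewrite mulrDr mulrA -natrM -expnD addnS subnKC.
Qed.

Lemma witt_theta_sum_lreg (n : nat) (f : A) : (1 <= n)%N ->
  D n A f = \sum_(k < n) T (n - k) A (D k A f).
Proof.
case: n => [//|n] _; apply: (@lregX _ _ n.+1 p_lreg); rewrite -natrX.
have := iter_phi_witt n.+1 f; rewrite big_ord_recr /= subnn expn0 expr1.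
rewrite iter_phi_witt rmorph_sum.
rewrite (eq_bigr _ (fun (k : 'I_n.+1) _ => phi_witt_term n k (D k A f) (ltn_ord k))).
by rewrite big_split /= mulr_sumr => /addrI.
Qed.
End TorsionFree.

Section FrobeniusLift.
Variables (p : nat) (p_prime : prime p) (S : comPzRingType) (F : {rmorphism S -> S}).

Definition lifts_frobenius (b : S) : Prop := exists c, F b = b ^+ p + p%:R * c.

Lemma lifts_frobenius1 : lifts_frobenius 1.
Proof. by exists 0; rewrite rmorph1 expr1n mulr0 addr0. Qed.

Lemma lifts_frobeniusN x : lifts_frobenius x -> lifts_frobenius (- x).
Proof.
move=> [c Fx]; exists (binom_carry p x (- x) - c); rewrite rmorphN Fx.
have := exprD_carry x (- x) p_prime; rewrite subrr expr0n gtn_eqF ?prime_gt0 //.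
by move/esym/addr0_eq => carry_eq; rewrite mulrBr -carry_eq; ring.
Qed.

Lemma lifts_frobeniusD x y :
  lifts_frobenius x -> lifts_frobenius y -> lifts_frobenius (x + y).
Proof.
move=> [cx Fx] [cy Fy]; exists (cx + cy - binom_carry p x y).
by rewrite rmorphD Fx Fy exprD_carry //; ring.
Qed.

Lemma lifts_frobeniusM x y :
  lifts_frobenius x -> lifts_frobenius y -> lifts_frobenius (x * y).
Proof.
move=> [cx Fx] [cy Fy]; exists (cx * y ^+ p + x ^+ p * cy + p%:R * cx * cy).
by rewrite rmorphM Fx Fy exprMn; ring.
Qed.

Hypotheses (F_lifts : forall b, lifts_frobenius b) (p_lreg : GRing.lreg (p%:R : S)).

Lemma exists_lift_delta b : exists c, F b - b ^+ p == p%:R * c.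
Proof. by have [c ->] := F_lifts b; exists c; rewrite addrAC subrr add0r. Qed.

Definition lift_delta (b : S) : S := xchoose (exists_lift_delta b).

Lemma lift_deltaE (b : S) : p%:R * lift_delta b = F b - b ^+ p.
Proof. exact/esym/eqP/(xchooseP (exists_lift_delta b)). Qed.

Lemma F_lift_delta (b : S) : F b = b ^+ p + p%:R * lift_delta b.
Proof. by rewrite lift_deltaE addrC subrK. Qed.

Lemma lift_delta0 : lift_delta 0 = 0.
Proof.
apply: p_lreg; rewrite lift_deltaE rmorph0 expr0n gtn_eqF ?prime_gt0 //.
by rewrite subrr mulr0.
Qed.

Lemma lift_delta1 : lift_delta 1 = 0.
Proof. by apply: p_lreg; rewrite lift_deltaE rmorph1 expr1n subrr mulr0. Qed.

Lemma lift_deltaM x y : lift_delta (x * y) =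
  x ^+ p * lift_delta y + y ^+ p * lift_delta x + p%:R * lift_delta x * lift_delta y.
Proof.
by apply: p_lreg; rewrite lift_deltaE rmorphM !F_lift_delta exprMn; ring.
Qed.

Lemma lift_deltaD x y : lift_delta (x + y) = lift_delta x + lift_delta y
  - \sum_(1 <= i < p) ('C(p, i) %/ p)%:R * x ^+ i * y ^+ (p - i).
Proof.
apply: p_lreg; rewrite -/(binom_carry p x y) lift_deltaE rmorphD !F_lift_delta.
by rewrite exprD_carry //; ring.
Qed.

Definition lift_delta_ring : deltaRing p :=
  DeltaRing lift_delta0 lift_delta1 lift_deltaM lift_deltaD.

End FrobeniusLift.

Section MonomialEvaluation.
Variables (S : comNzRingType) (v : nat -> S).

Definition cmonom_eval (m : cmonom nat) : S := \prod_(i <- finsupp m) v i ^+ m i.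

Lemma cmonom_evalEw (d : {fset nat}) (m : cmonom nat) : (finsupp m `<=` d)%fset ->
  cmonom_eval m = \prod_(i <- d) v i ^+ m i.
Proof.
move=> sub; rewrite /cmonom_eval (big_fset_incl _ sub) //.
by move=> i _ /negPf; rewrite -cmE_neq0 => /negbFE/eqP ->.
Qed.

Lemma cmonom_eval_is_mmorphism : mmorphism cmonom_eval.
Proof.
split=> [m1 m2|]; last by rewrite /cmonom_eval mdom1 big_seq_fset0.
rewrite (cmonom_evalEw (fsubsetUl (finsupp m1) (finsupp m2))).
rewrite (cmonom_evalEw (fsubsetUr (finsupp m1) (finsupp m2))).
rewrite /cmonom_eval mdomD -big_split /=; apply: eq_bigr => i _.
by rewrite cmM exprD.
Qed.

HB.instance Definition _ := isMultiplicative.Build _ _ cmonom_eval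
  cmonom_eval_is_mmorphism.

End MonomialEvaluation.

Notation ZX := {malg int[cmonom nat]}.

Definition X (i : nat) : ZX := << ucm i >>.

Notation peval v := (mmap (intr : int -> _) (cmonom_eval v)).

Lemma peval_X (S : comNzRingType) (v : nat -> S) (i : nat) : peval v (X i) = v i.
Proof.
rewrite /X mmapU /cmonom_eval mdomU big_seq_fset1 ucmE eqxx /=.
by rewrite mulr1z mul1r expr1.
Qed.

Lemma monom_ind (P : ZX -> Prop) :
  P 1 -> (forall x y, P x -> P y -> P (x * y)) -> (forall i, P (X i)) ->
  forall m : cmonom nat, P << m >>.
Proof.
move=> P1 PM PX m; move deg_m: (mdeg m) => k; elim: k m deg_m => [|k IH] m deg_m.
  by move/mdeg_eq0I: deg_m => ->.
have /fset0Pn[i] : finsupp m != fset0.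
  by apply: contra_eqN deg_m => /eqP supp0; rewrite mdegE supp0 big_seq_fset0.
rewrite -cmE_neq0 => m_i.
have m_split : m = mmul (ucm i) (divcm m (ucm i)).
  apply/eqP/cmP => j; rewrite cmM divcmE ucmE.
  by case: eqVneq => [<-|_]; [rewrite add1n subn1 prednK // lt0n | rewrite add0n subn0].
have -> : << m >> = X i * << divcm m (ucm i) >> :> ZX.
  by rewrite {1}m_split malgM_def fgmulUU mulr1.
apply: PM; first exact: PX.
by apply: IH; move: deg_m; rewrite {1}m_split mdegM mdegU add1n => -[].
Qed.

Lemma ZX_ind (P : ZX -> Prop) :
  P 1 -> (forall x, P x -> P (- x)) -> (forall x y, P x -> P y -> P (x + y)) ->
  (forall x y, P x -> P y -> P (x * y)) -> (forall i, P (X i)) -> forall b, P b.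
Proof.
move=> P1 PN PD PM PX.
have P0 : P 0 by rewrite -(subrr (1 : ZX)); apply: PD => //; apply: PN.
have PMz x (c : int) : P x -> P (x *~ c).
  move=> Px; have PMn n : P (x *+ n).
    by elim: n => [|n IH]; [rewrite mulr0n | rewrite mulrS; apply: PD].
  by case: c => n; [apply: PMn | rewrite NegzE mulrNz; apply/PN/PMn].
move=> b; rewrite (monalgE b); apply: (big_ind P P0 PD) => m _.
by rewrite -[b@_m]intz raddfMz; apply: PMz; apply: monom_ind.
Qed.

Lemma lreg_natZX (N : nat) : (0 < N)%N -> GRing.lreg (N%:R : ZX).
Proof.
move=> N_gt0 x y; rewrite !mulr_natl => eqNxy; apply/malgP => m.
apply/eqP; move/(congr1 (mcoeff m))/eqP: eqNxy.
by rewrite !mcoeffMn Num.Theory.eqrMn2r -[N]prednK.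
Qed.

Section FreeDeltaRing.
Variables (p : nat) (p_prime : prime p).

Definition frobZX : {rmorphism ZX -> ZX} := peval (fun i => X i ^+ p + p%:R * X i.+1).

Lemma frobZX_lifts (b : ZX) : lifts_frobenius p frobZX b.
Proof.
elim/ZX_ind: b => [|x|x y|x y|i].
- exact: lifts_frobenius1.
- exact: lifts_frobeniusN.
- exact: lifts_frobeniusD.
- exact: lifts_frobeniusM.
- by exists (X i.+1); apply: peval_X.
Qed.

Let p_lreg : GRing.lreg (p%:R : ZX) := lreg_natZX (prime_gt0 p_prime).

Definition free_delta_ring : deltaRing p :=
  lift_delta_ring p_prime frobZX_lifts p_lreg.

Lemma free_delta_X (i : nat) : delta free_delta_ring (X i) = X i.+1.
Proof.
have frobX : frobZX (X i) = X i ^+ p + p%:R * X i.+1 := peval_X _ i.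
apply: p_lreg; apply: (addrI (X i ^+ p)).
exact: etrans (esym (F_lift_delta frobZX_lifts (X i))) frobX.
Qed.

End FreeDeltaRing.

Section NonzeroEvaluation.
Variables (R : comPzRingType) (R_nz : (1 : R) != 0) (v : nat -> R).

(* The evaluation maps of monalg only land in nontrivial rings. *)
Definition nonzero_ring : Type := R.
HB.instance Definition _ := GRing.ComPzRing.on nonzero_ring.
HB.instance Definition _ := GRing.PzSemiRing_isNonZero.Build nonzero_ring R_nz.

Definition eval_at : ZX -> R := peval (v : nat -> nonzero_ring).
HB.instance Definition _ :=
  GRing.RMorphism.copy eval_at (peval (v : nat -> nonzero_ring)).

Lemma eval_at_X (i : nat) : eval_at (X i) = v i.
Proof. exact: (peval_X (v : nat -> nonzero_ring) i). Qed.

End NonzeroEvaluation.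

Lemma free_delta_hom (p : nat) (p_prime : prime p) (A : deltaRing p)
    (g : {rmorphism free_delta_ring p_prime -> A}) :
  (forall i, g (X i.+1) = delta A (g (X i))) -> delta_hom g.
Proof.
move=> gX; elim/ZX_ind => [|x|x y|x y|i].
- exact: delta_hom1.
- exact: delta_homN.
- exact: delta_homD.
- exact: delta_homM.
- rewrite free_delta_X; exact: gX.
Qed.

Theorem lemma4p15 (p : nat) (p_prime : prime p)
  (D T : nat -> forall A : deltaRing p, A -> A) :
  witt_components D -> theta_ops T ->
  forall (A : deltaRing p) (n : nat) (f : A), (1 <= n)%N ->
    D n A f = \sum_(k < n) T (n - k)%N A (D k A f).
Proof.
move=> [D_nat D_witt] [T_nat T_theta] A n f n_ge1.
have [A0|A_nz] := eqVneq (1 : A) 0.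
  have all0 (a : A) : a = 0 by rewrite -[a]mulr1 A0 mulr0.
  by rewrite [LHS]all0 [RHS]all0.
pose g : {rmorphism free_delta_ring p_prime -> A} :=
  eval_at A_nz (fun i => iter i (delta A) f).
have gX (i : nat) : g (X i) = iter i (delta A) f := eval_at_X A_nz _ i.
have g_hom : delta_hom g.
  by apply: free_delta_hom => i; exact: etrans (gX i.+1) (congr1 _ (esym (gX i))).
have p_lreg : GRing.lreg (p%:R : free_delta_ring p_prime) :=
  lreg_natZX (prime_gt0 p_prime).
have gX0 : g (X 0) = f := gX 0.
rewrite -gX0 -(D_nat n _ _ g g_hom).
rewrite (witt_theta_sum_lreg p_prime p_lreg (D_witt _) (T_theta _) _ _ n_ge1).
rewrite rmorph_sum; apply: eq_bigr => k _.
have k_lt : (0 < n - k)%N by rewrite subn_gt0.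
by rewrite (T_nat _ k_lt _ _ g g_hom) (D_nat k _ _ g g_hom).
Qed.
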